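(* Consider the planar system $$\frac{dC}{dt} = 1 + m_1\frac{CL}{1+L} - m_2\frac{CL}{1+m_3C} - m_4C,\qquad \frac{dL}{dt} = L - m_5 CL,$$ with positive parameters $m_1,\dots,m_5$, and its equilibria $E_1=(1/m_4,0)$, $E_2=(1/m_5,L_2)$, $E_3=(1/m_5,L_3)$, where $L_2=\frac{-b-\sqrt{\Delta}}{2a}$, $L_3=\frac{-b+\sqrt{\Delta}}{2a}$ with $a=-\frac{m_2}{1+m_3/m_5}$, $b=m_1+m_5-m_4-\frac{m_2}{1+m_3/m_5}$, $c=m_5-m_4$, $\Delta=b^2-4ac$. The equilibria $E_1$, $E_2$ and $E_3$ undergo a subcritical pitchfork bifurcation when $m_5=m_4$ and $m_2=m_1(1+m_3/m_5)$.
   Context: Nondimensional model of CAR-T cells $C$ and lymphoma cells $L$; $E_1$ is the tumor-free equilibrium and $E_2,E_3$ are the coexistence equilibria with $C=1/m_5$. *)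

From Stdlib Require Import Reals.
From Coquelicot Require Import Coquelicot.
Open Scope R_scope.

Definition fC (m1 m2 m3 m4 : R) (C L : R) : R :=
  1 + m1 * C * L / (1 + L) - m2 * C * L / (1 + m3 * C) - m4 * C.
Definition fL (m5 : R) (C L : R) : R := L - m5 * C * L.

(* Coefficients of the quadratic for the L-coordinate of Eq2, Eq3. *)
Definition qa (m2 m3 m5 : R) : R := - (m2 / (1 + m3 / m5)).
Definition qb (m1 m2 m3 m4 m5 : R) : R := m1 + m5 - m4 - m2 / (1 + m3 / m5).
Definition qc (m4 m5 : R) : R := m5 - m4.
Definition qDelta (m1 m2 m3 m4 m5 : R) : R :=
  (qb m1 m2 m3 m4 m5)^2 - 4 * qa m2 m3 m5 * qc m4 m5.
Definition L2 (m1 m2 m3 m4 m5 : R) : R :=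
  (- qb m1 m2 m3 m4 m5 - sqrt (qDelta m1 m2 m3 m4 m5)) / (2 * qa m2 m3 m5).
Definition L3 (m1 m2 m3 m4 m5 : R) : R :=
  (- qb m1 m2 m3 m4 m5 + sqrt (qDelta m1 m2 m3 m4 m5)) / (2 * qa m2 m3 m5).
Definition Eq1 (m4 : R) : R * R := (1 / m4, 0).
Definition Eq2 (m1 m2 m3 m4 m5 : R) : R * R := (1 / m5, L2 m1 m2 m3 m4 m5).
Definition Eq3 (m1 m2 m3 m4 m5 : R) : R * R := (1 / m5, L3 m1 m2 m3 m4 m5).

Definition is_equil (F1 F2 : R -> R -> R -> R) (p x y : R) : Prop :=
  F1 p x y = 0 /\ F2 p x y = 0.

Definition J11 (F1 : R -> R -> R -> R) p x y := Derive (fun u => F1 p u y) x.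
Definition J12 (F1 : R -> R -> R -> R) p x y := Derive (fun v => F1 p x v) y.
Definition J21 (F2 : R -> R -> R -> R) p x y := Derive (fun u => F2 p u y) x.
Definition J22 (F2 : R -> R -> R -> R) p x y := Derive (fun v => F2 p x v) y.
Definition jac_tr F1 F2 p x y := J11 F1 p x y + J22 F2 p x y.
Definition jac_det F1 F2 p x y :=
  J11 F1 p x y * J22 F2 p x y - J12 F1 p x y * J21 F2 p x y.

(* Linear stability of an equilibrium of a planar system:
   both eigenvalues of the 2x2 Jacobian have negative real part
   (for 2x2 matrices: trace < 0 and determinant > 0). *)
Definition lin_stable F1 F2 p x y : Prop :=
  jac_tr F1 F2 p x y < 0 /\ 0 < jac_det F1 F2 p x y.
(* Linear instability: some eigenvalue has positive real part
   (for 2x2 matrices: determinant < 0 or trace > 0). *)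
Definition lin_unstable F1 F2 p x y : Prop :=
  jac_det F1 F2 p x y < 0 \/ 0 < jac_tr F1 F2 p x y.

Definition in_box (r x0 y0 x y : R) : Prop := Rabs (x - x0) < r /\ Rabs (y - y0) < r.

Definition subcritical_pitchfork (F1 F2 : R -> R -> R -> R) (p0 x0 y0 : R) : Prop :=
  is_equil F1 F2 p0 x0 y0 /\
  exists s r d : R, (s = 1 \/ s = -1) /\ 0 < r /\ 0 < d /\
   (forall p, 0 < s * (p - p0) < d ->
      exists a0 b0 a1 b1 a2 b2 : R,
        (a0, b0) <> (a1, b1) /\ (a0, b0) <> (a2, b2) /\ (a1, b1) <> (a2, b2) /\
        in_box r x0 y0 a0 b0 /\ in_box r x0 y0 a1 b1 /\ in_box r x0 y0 a2 b2 /\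
        is_equil F1 F2 p a0 b0 /\ is_equil F1 F2 p a1 b1 /\ is_equil F1 F2 p a2 b2 /\
        (forall x y, in_box r x0 y0 x y -> is_equil F1 F2 p x y ->
           (x, y) = (a0, b0) \/ (x, y) = (a1, b1) \/ (x, y) = (a2, b2)) /\
        lin_stable F1 F2 p a0 b0 /\ lin_unstable F1 F2 p a1 b1 /\
        lin_unstable F1 F2 p a2 b2) /\
   (forall p, 0 < - s * (p - p0) < d ->
      exists a b : R, in_box r x0 y0 a b /\ is_equil F1 F2 p a b /\
        (forall x y, in_box r x0 y0 x y -> is_equil F1 F2 p x y -> x = a /\ y = b) /\
        lin_unstable F1 F2 p a b) /\
   (forall e, 0 < e -> exists d', 0 < d' /\ forall p x y,
      0 < Rabs (p - p0) < d' -> in_box r x0 y0 x y -> is_equil F1 F2 p x y ->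
      in_box e x0 y0 x y).

(* On the nullcline C = 1/m5, clearing denominators turns dC/dt = 0 into the
   quadratic qa L^2 + qb L + qc = 0, while the nullcline L = 0 carries only E1.
   When m2 = m1 (1 + m3/m4), writing e = m5 - m4, the quadratic becomes
   (m1 + g e) L^2 = e (1 + (1 - g) L) with 0 < g < m1/m4.  Hence for small |e|
   every root is small; for e < 0 there is no small root at all (the left side
   is >= 0, the right side < 0), and for e > 0 the discriminant qb^2 + 4 k e
   (k = - qa > 0) is positive, giving the two branches L2, L3 through 0.
   The Jacobian at E1 has determinant m5 - m4, and at E2, E3 determinant
   -(e + k L^2)/(1 + L) < 0: E1 is stable exactly on the branching side. *)

From Stdlib Require Import Reals Lra Psatz.
From Coquelicot Require Import Coquelicot.
Open Scope R_scope.

Lemma quadratic_roots a b c y : a <> 0 -> 0 <= b^2 - 4*a*c ->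
  a*y^2 + b*y + c = 0 <->
  y = (-b - sqrt (b^2 - 4*a*c)) / (2*a) \/ y = (-b + sqrt (b^2 - 4*a*c)) / (2*a).
Proof.
intros Ha HD. set (na := mknonzeroreal a Ha).
assert (HD' : Delta_is_pos na b c).
{ unfold Delta_is_pos, Delta; simpl; rewrite Rsqr_pow2; exact HD. }
rewrite <- Rsqr_pow2. split.
- intro H. destruct (Rsqr_sol_eq_0_0 na b c y HD' H) as [E|E];
    unfold sol_x1, sol_x2, Delta in E; simpl in E; rewrite Rsqr_pow2 in E; auto.
- intro H. apply (Rsqr_sol_eq_0_1 na b c y HD').
  unfold sol_x1, sol_x2, Delta; simpl; rewrite Rsqr_pow2; tauto.
Qed.

Lemma quadratic_small_root K M rho E u :
  0 < K -> 0 < rho -> 0 <= M -> 0 <= u -> 0 <= E ->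
  K * u^2 <= E * (1 + M * u) -> E * (1 + M * rho) < K * rho^2 -> u < rho.
Proof.
intros. destruct (Rlt_or_le u rho) as [|Hu]; auto.
assert (E * M < K * rho) by (apply Rmult_lt_reg_r with rho; nra).
assert (0 <= (u - rho) * (K * (u + rho) - E * M)) by (apply Rmult_le_pos; nra).
nra.
Qed.

Lemma in_box_center r x y : 0 < r -> in_box r x y x y.
Proof. intros. unfold in_box. rewrite !Rminus_diag, Rabs_R0. lra. Qed.

Definition nullcline_quad m1 m2 m3 m4 p L :=
  qa m2 m3 p * L^2 + qb m1 m2 m3 m4 p * L + qc m4 p.

Section Model.

Variables m1 m2 m3 m4 : R.

Local Notation FC := (fun _ C L : R => fC m1 m2 m3 m4 C L).
Local Notation FL := (fun m5 C L : R => fL m5 C L).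
Local Notation quad := (nullcline_quad m1 m2 m3 m4).

Lemma fC_L0 C : fC m1 m2 m3 m4 C 0 = 1 - m4 * C.
Proof. unfold fC, Rdiv. ring. Qed.

Lemma fC_nullcline p L : 0 < p -> 0 < m3 -> 1 + L <> 0 ->
  fC m1 m2 m3 m4 (1/p) L * (p * (1 + L)) = quad p L.
Proof.
intros. assert (0 < m3 / p) by (apply Rdiv_lt_0_compat; lra).
unfold fC, nullcline_quad, qa, qb, qc. field. repeat split; lra.
Qed.

Lemma equil_E1 p : 0 < m4 -> is_equil FC FL p (1/m4) 0.
Proof. intros. split; cbv beta; [rewrite fC_L0; field | unfold fL; ring]; lra. Qed.

Lemma equil_nullcline p L : 0 < p -> 0 < m3 -> -1 < L -> quad p L = 0 ->
  is_equil FC FL p (1/p) L.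
Proof.
intros Hp Hm3 HL Hq. split; cbv beta.
- rewrite <- (fC_nullcline p L) in Hq by lra.
  apply Rmult_integral in Hq as [|]; [assumption | nra].
- unfold fL. field. lra.
Qed.

Lemma equil_cases p x y : 0 < p -> 0 < m3 -> 0 < m4 -> -1 < y ->
  is_equil FC FL p x y ->
  (x = 1/m4 /\ y = 0) \/ (x = 1/p /\ quad p y = 0).
Proof.
intros Hp Hm3 Hm4 Hy [HC HL]. cbv beta in HC, HL. unfold fL in HL.
assert (y * (1 - p * x) = 0) as [Hy0|Hx]%Rmult_integral by lra.
- left. subst y. rewrite fC_L0 in HC. split; [field_simplify_eq|]; lra.
- right. assert (x = 1/p) by (field_simplify_eq; lra). subst x. split; [reflexivity|].
  rewrite <- (fC_nullcline p y), HC by lra. ring.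
Qed.

Lemma Derive_fC_C_L0 C : Derive (fun u => fC m1 m2 m3 m4 u 0) C = - m4.
Proof.
rewrite (Derive_ext _ (fun u => 1 - m4 * u)) by apply fC_L0.
apply is_derive_unique. auto_derive; [exact I | ring].
Qed.

Lemma Derive_fC_L C L : 1 + L <> 0 -> 1 + m3 * C <> 0 ->
  Derive (fun v => fC m1 m2 m3 m4 C v) L = C * (m1 / (1 + L)^2 - m2 / (1 + m3 * C)).
Proof. intros. apply is_derive_unique. unfold fC. auto_derive; [auto | field; auto]. Qed.

Lemma Derive_fL_C p C L : Derive (fun u => fL p u L) C = - p * L.
Proof. apply is_derive_unique. unfold fL. auto_derive; [exact I | ring]. Qed.

Lemma Derive_fL_L p C L : Derive (fun v => fL p C v) L = 1 - p * C.
Proof. apply is_derive_unique. unfold fL. auto_derive; [exact I | ring]. Qed.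

Lemma jac_tr_E1 p : jac_tr FC FL p (1/m4) 0 = - m4 + 1 - p / m4.
Proof. unfold jac_tr, J11, J22. rewrite Derive_fC_C_L0, Derive_fL_L. unfold Rdiv. ring. Qed.

Lemma jac_det_E1 p : 0 < m4 -> jac_det FC FL p (1/m4) 0 = p - m4.
Proof.
intros. unfold jac_det, J11, J12, J21, J22.
rewrite Derive_fC_C_L0, Derive_fL_C, Derive_fL_L. field. lra.
Qed.

Lemma lin_stable_E1 p : 0 < m4 -> m4 < p -> lin_stable FC FL p (1/m4) 0.
Proof.
intros. unfold lin_stable. rewrite jac_tr_E1, jac_det_E1 by lra.
enough (1 < p / m4) by lra. apply Rlt_div_r; lra.
Qed.

Lemma lin_unstable_E1 p : 0 < m4 -> p < m4 -> lin_unstable FC FL p (1/m4) 0.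
Proof. intros. left. rewrite jac_det_E1; lra. Qed.

(* J22 vanishes on the nullcline C = 1/p, and the equilibrium relation
   m1 L / (1 + L) = k L - (p - m4), with k = - qa, eliminates m1. *)
Lemma jac_det_nullcline p L : 0 < p -> 0 < m3 -> -1 < L -> quad p L = 0 ->
  jac_det FC FL p (1/p) L = - ((p - m4) - qa m2 m3 p * L^2) / (1 + L).
Proof.
intros Hp Hm3 HL Hq. assert (0 < m3 / p) by (apply Rdiv_lt_0_compat; lra).
unfold jac_det, J11, J12, J21, J22.
rewrite Derive_fC_L, Derive_fL_C, Derive_fL_L by (unfold Rdiv in *; nra).
set (J := Derive _ _). set (k := m2 / (1 + m3 / p)).
assert (Hm1 : m1 * L = (k * L - (p - m4)) * (1 + L)).
{ unfold nullcline_quad, qa, qb, qc in Hq. fold k in Hq. nra. }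
transitivity (m1 * L / (1 + L)^2 - k * L).
- unfold k. field. lra.
- rewrite Hm1. unfold qa. fold k. field. lra.
Qed.

Lemma lin_unstable_nullcline p L : 0 < m2 -> 0 < m3 -> 0 < p -> m4 < p -> -1 < L ->
  quad p L = 0 -> lin_unstable FC FL p (1/p) L.
Proof.
intros Hm2 Hm3 Hp Hpm HL Hq. left. rewrite jac_det_nullcline by assumption.
assert (0 < m3 / p) by (apply Rdiv_lt_0_compat; lra).
assert (0 < m2 / (1 + m3 / p)) by (apply Rdiv_lt_0_compat; lra).
unfold qa. apply Rdiv_neg_pos; [|lra]. nra.
Qed.

Lemma qa_neg p : 0 < m2 -> 0 < m3 -> 0 < p -> qa m2 m3 p < 0.
Proof.
intros. assert (0 < m3 / p) by (apply Rdiv_lt_0_compat; lra).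
assert (0 < m2 / (1 + m3 / p)) by (apply Rdiv_lt_0_compat; lra).
unfold qa. lra.
Qed.

Lemma qDelta_pos p : 0 < m2 -> 0 < m3 -> 0 < p -> m4 < p -> 0 < qDelta m1 m2 m3 m4 p.
Proof.
intros. assert (qa m2 m3 p < 0) by (apply qa_neg; assumption).
assert (0 <= qb m1 m2 m3 m4 p ^ 2) by apply pow2_ge_0.
unfold qDelta, qc. nra.
Qed.

Lemma nullcline_roots p y : 0 < m2 -> 0 < m3 -> 0 < p -> m4 < p ->
  quad p y = 0 <-> y = L2 m1 m2 m3 m4 p \/ y = L3 m1 m2 m3 m4 p.
Proof.
intros. apply quadratic_roots.
- apply Rlt_not_eq, qa_neg; assumption.
- apply Rlt_le, qDelta_pos; assumption.
Qed.

Lemma L2_neq_L3 p : 0 < m2 -> 0 < m3 -> 0 < p -> m4 < p ->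
  L2 m1 m2 m3 m4 p <> L3 m1 m2 m3 m4 p.
Proof.
intros. assert (qa m2 m3 p < 0) by (apply qa_neg; assumption).
assert (0 < sqrt (qDelta m1 m2 m3 m4 p)) by (apply sqrt_lt_R0, qDelta_pos; assumption).
unfold L2, L3. intro E. field_simplify_eq in E; lra.
Qed.

End Model.

Section Critical.

Variables m1 m2 m3 m4 : R.
Hypotheses (Hm1 : 0 < m1) (Hm3 : 0 < m3) (Hm4 : 0 < m4).
Hypothesis Hcrit : m2 = m1 * (1 + m3 / m4).

Local Notation FC := (fun _ C L : R => fC m1 m2 m3 m4 C L).
Local Notation FL := (fun m5 C L : R => fL m5 C L).
Local Notation quad := (nullcline_quad m1 m2 m3 m4).

Lemma crit_m2_pos : 0 < m2.
Proof. assert (0 < m3 / m4) by (apply Rdiv_lt_0_compat; lra). subst m2. nra. Qed.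

Definition crit_gain p := m1 / m4 * (m3 / (p + m3)).

Lemma crit_gain_bounds p : 0 < p -> 0 < crit_gain p < m1 / m4.
Proof.
intros. assert (0 < m1 / m4) by (apply Rdiv_lt_0_compat; lra).
assert (0 < m3 / (p + m3) < 1) as [].
{ split; [apply Rdiv_lt_0_compat | apply Rlt_div_l]; lra. }
unfold crit_gain. split; nra.
Qed.

Lemma nullcline_quad_crit p y : 0 < p ->
  quad p y = (p - m4) * (1 + (1 - crit_gain p) * y)
             - (m1 + crit_gain p * (p - m4)) * y^2.
Proof.
intros. assert (0 < m3 / p) by (apply Rdiv_lt_0_compat; lra).
unfold nullcline_quad, qa, qb, qc, crit_gain. subst m2. field. repeat split; lra.
Qed.

Lemma no_small_root_below p y : 0 < p < m4 -> (1 + m1 / m4) * Rabs y <= 1/2 ->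
  quad p y <> 0.
Proof.
intros Hp Hy. rewrite nullcline_quad_crit by lra.
destruct (crit_gain_bounds p) as [g0 g1]; [lra|]. set (g := crit_gain p) in *.
assert (g * m4 < m1) by (apply Rlt_div_r in g1; lra).
assert (Hlin : Rabs ((1 - g) * y) <= 1/2).
{ rewrite Rabs_mult. eapply Rle_trans; [|exact Hy].
  apply Rmult_le_compat_r; [apply Rabs_pos | apply Rabs_le; lra]. }
apply Rabs_le_between in Hlin.
assert (0 <= (m1 + g * (p - m4)) * y^2) by (apply Rmult_le_pos; [nra | apply pow2_ge_0]).
assert ((p - m4) * (1 + (1 - g) * y) < 0) by (apply Rmult_neg_pos; lra).
lra.
Qed.

(* In the box, (1 + m1/m4) |L| <= 1/2 keeps the linear term of the quadratic
   dominated by its constant term; the bounds in param_radius give p > m4/2,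
   |1/p - 1/m4| < rho, and roots of modulus < rho, respectively. *)
Definition box_radius := / (2 * (1 + m1 / m4)).

Definition param_radius rho := Rmin (m4 / 2) (Rmin (rho * m4^2 / 2) (m1 * rho^2 / 3)).

Lemma box_radius_spec : 0 < box_radius < 1/2 /\ (1 + m1 / m4) * box_radius = 1/2.
Proof.
assert (0 < m1 / m4) by (apply Rdiv_lt_0_compat; lra).
unfold box_radius. split; [split|].
- apply Rinv_0_lt_compat. lra.
- unfold Rdiv. rewrite Rmult_1_l. apply Rinv_lt_contravar; lra.
- field. lra.
Qed.

Lemma param_radius_pos rho : 0 < rho -> 0 < param_radius rho.
Proof.
intros. assert (0 < rho * m4^2) by (apply Rmult_lt_0_compat, pow_lt; lra).
assert (0 < m1 * rho^2) by (apply Rmult_lt_0_compat, pow_lt; lra).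
unfold param_radius. repeat apply Rmin_glb_lt; lra.
Qed.

Lemma param_near p rho : 0 < rho -> Rabs (p - m4) < param_radius rho ->
  0 < p /\ Rabs (1/p - 1/m4) < rho.
Proof.
intros Hrho Hp. unfold param_radius in Hp.
apply Rmin_Rgt in Hp as [Hp1 [Hp2 _]%Rmin_Rgt].
apply Rabs_lt_between in Hp1. split; [lra|].
replace (1/p - 1/m4) with ((m4 - p) / (p * m4)) by (field; lra).
rewrite Rabs_div, (Rabs_pos_eq (p * m4)), Rabs_minus_sym by nra.
apply Rlt_div_l; [nra|].
assert (rho * m4 * (m4 / 2) <= rho * m4 * p) by (apply Rmult_le_compat_l; nra).
nra.
Qed.

Lemma small_roots p rho y : 0 < rho <= box_radius -> Rabs (p - m4) < param_radius rho ->
  quad p y = 0 -> Rabs y < rho.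
Proof.
intros [Hrho Hrb] Hp Hq.
destruct (param_near p rho Hrho Hp) as [Pp _].
unfold param_radius in Hp. apply Rmin_Rgt in Hp as [Hp1 [_ Hp3]%Rmin_Rgt].
rewrite nullcline_quad_crit in Hq by lra.
destruct (crit_gain_bounds p Pp) as [g0 g1].
set (g := crit_gain p) in *. set (e := p - m4) in *.
set (M := 1 + m1 / m4).
assert (HM : M * rho <= 1/2).
{ destruct box_radius_spec as [_ <-]. apply Rmult_le_compat_l; [|assumption].
  assert (0 < m1 / m4) by (apply Rdiv_lt_0_compat; lra). unfold M. lra. }
assert (Hge : Rabs (g * e) <= m1 / 2).
{ rewrite Rabs_mult, (Rabs_pos_eq g) by lra.
  apply Rle_trans with (m1 / m4 * (m4 / 2)); [apply Rmult_le_compat; try lra; apply Rabs_pos |].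
  right. field. lra. }
apply Rabs_le_between in Hge.
assert (Hlhs : m1 / 2 * y^2 <= (m1 + g * e) * y^2).
{ apply Rmult_le_compat_r; [apply pow2_ge_0 | lra]. }
assert (Hrhs : e * (1 + (1 - g) * y) <= Rabs e * (1 + M * Rabs y)).
{ eapply Rle_trans; [apply Rle_abs|]. rewrite Rabs_mult.
  apply Rmult_le_compat_l; [apply Rabs_pos|].
  eapply Rle_trans; [apply Rabs_triang|]. rewrite Rabs_R1, Rabs_mult.
  apply Rplus_le_compat_l, Rmult_le_compat_r; [apply Rabs_pos|].
  apply Rabs_le. unfold M. lra. }
apply (quadratic_small_root (m1 / 2) M rho (Rabs e)); try apply Rabs_pos; try lra.
- unfold M. assert (0 < m1 / m4) by (apply Rdiv_lt_0_compat; lra). lra.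
- rewrite pow2_abs. lra.
- assert (Rabs e * (M * rho) <= Rabs e * (1/2)) by (apply Rmult_le_compat_l; [apply Rabs_pos | exact HM]).
  lra.
Qed.

Lemma equil_in_box p x y : 0 < p -> in_box box_radius (1/m4) 0 x y ->
  is_equil FC FL p x y -> (x = 1/m4 /\ y = 0) \/ (x = 1/p /\ quad p y = 0).
Proof.
intros Hp [_ Hy] He. apply equil_cases; try assumption.
destruct box_radius_spec as [[_ ?] _].
rewrite Rminus_0_r in Hy. apply Rabs_lt_between in Hy. lra.
Qed.

Lemma branches_small p : m4 < p < m4 + param_radius box_radius ->
  0 < p /\ Rabs (1/p - 1/m4) < box_radius /\
  Rabs (L2 m1 m2 m3 m4 p) < box_radius /\ Rabs (L3 m1 m2 m3 m4 p) < box_radius.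
Proof.
intros Hp. destruct box_radius_spec as [[Hr _] _].
assert (Hd : Rabs (p - m4) < param_radius box_radius) by (apply Rabs_lt_between'; lra).
destruct (param_near p box_radius Hr Hd) as [Pp Hx].
assert (Hm2 := crit_m2_pos).
assert (Hroot : forall y, y = L2 m1 m2 m3 m4 p \/ y = L3 m1 m2 m3 m4 p -> quad p y = 0).
{ intros y Hy. apply nullcline_roots; auto; lra. }
split; [|split; [|split]]; try assumption;
  (apply small_roots with p; [lra | assumption | apply Hroot; auto]).
Qed.

Lemma equil_branches p : m4 < p < m4 + param_radius box_radius ->
  is_equil FC FL p (1/p) (L2 m1 m2 m3 m4 p) /\ is_equil FC FL p (1/p) (L3 m1 m2 m3 m4 p).
Proof.
intros Hp. destruct (branches_small p Hp) as [Pp [_ [S2 S3]]].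
destruct box_radius_spec as [[_ Hr] _].
assert (Hm2 := crit_m2_pos).
apply Rabs_lt_between in S2, S3.
split; apply equil_nullcline; try (assumption || lra); apply nullcline_roots; auto; lra.
Qed.

Lemma three_equilibria_above p : m4 < p < m4 + param_radius box_radius ->
  exists a0 b0 a1 b1 a2 b2 : R,
    (a0, b0) <> (a1, b1) /\ (a0, b0) <> (a2, b2) /\ (a1, b1) <> (a2, b2) /\
    in_box box_radius (1/m4) 0 a0 b0 /\ in_box box_radius (1/m4) 0 a1 b1 /\
    in_box box_radius (1/m4) 0 a2 b2 /\
    is_equil FC FL p a0 b0 /\ is_equil FC FL p a1 b1 /\ is_equil FC FL p a2 b2 /\
    (forall x y, in_box box_radius (1/m4) 0 x y -> is_equil FC FL p x y ->
       (x, y) = (a0, b0) \/ (x, y) = (a1, b1) \/ (x, y) = (a2, b2)) /\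
    lin_stable FC FL p a0 b0 /\ lin_unstable FC FL p a1 b1 /\ lin_unstable FC FL p a2 b2.
Proof.
intros Hp. destruct (branches_small p Hp) as [Pp [Hx [S2 S3]]].
destruct (equil_branches p Hp) as [E2 E3].
destruct box_radius_spec as [[Hr Hr2] _].
assert (Hm2 := crit_m2_pos).
assert (N1 : 1/p <> 1/m4).
{ assert (1/p < 1/m4) by (unfold Rdiv; rewrite !Rmult_1_l; apply Rinv_lt_contravar; nra). lra. }
assert (N23 := L2_neq_L3 m1 m2 m3 m4 p Hm2 Hm3 Pp (proj1 Hp)).
exists (1/m4), 0, (1/p), (L2 m1 m2 m3 m4 p), (1/p), (L3 m1 m2 m3 m4 p).
split; [congruence|]. split; [congruence|]. split; [congruence|].
split; [apply in_box_center; lra|].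
split; [unfold in_box; rewrite Rminus_0_r; tauto|].
split; [unfold in_box; rewrite Rminus_0_r; tauto|].
split; [apply equil_E1; lra|]. split; [assumption|]. split; [assumption|].
split.
{ intros x y Hb He. destruct (equil_in_box p x y Pp Hb He) as [[-> ->]|[-> Hq]]; [now left|].
  right. apply nullcline_roots in Hq as [-> | ->]; auto; lra. }
split; [apply lin_stable_E1; lra|].
apply Rabs_lt_between in S2, S3.
split; apply lin_unstable_nullcline; try assumption; try lra;
  apply nullcline_roots; auto; lra.
Qed.

Lemma one_equilibrium_below p : m4 - param_radius box_radius < p < m4 ->
  exists a b : R, in_box box_radius (1/m4) 0 a b /\ is_equil FC FL p a b /\
    (forall x y, in_box box_radius (1/m4) 0 x y -> is_equil FC FL p x y -> x = a /\ y = b) /\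
    lin_unstable FC FL p a b.
Proof.
intros Hp. destruct box_radius_spec as [[Hr _] HM].
assert (Hd : Rabs (p - m4) < param_radius box_radius) by (apply Rabs_lt_between'; lra).
destruct (param_near p box_radius Hr Hd) as [Pp _].
exists (1/m4), 0.
split; [apply in_box_center; lra|].
split; [apply equil_E1; lra|].
split; [|apply lin_unstable_E1; lra].
intros x y Hb He. destruct (equil_in_box p x y Pp Hb He) as [|[_ Hq]]; [assumption|].
exfalso. apply (no_small_root_below p y); [lra | | assumption].
rewrite <- HM. apply Rmult_le_compat_l.
- assert (0 < m1 / m4) by (apply Rdiv_lt_0_compat; lra). lra.
- destruct Hb as [_ Hy]. rewrite Rminus_0_r in Hy. lra.
Qed.

Lemma equilibria_converge e : 0 < e -> exists d, 0 < d /\ forall p x y,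
  0 < Rabs (p - m4) < d -> in_box box_radius (1/m4) 0 x y -> is_equil FC FL p x y ->
  in_box e (1/m4) 0 x y.
Proof.
intros He. destruct box_radius_spec as [[Hr _] _].
set (rho := Rmin e box_radius).
assert (Hrho : 0 < rho <= box_radius) by (split; [apply Rmin_glb_lt | apply Rmin_r]; lra).
assert (rho <= e) by apply Rmin_l.
exists (param_radius rho). split; [apply param_radius_pos; lra|].
intros p x y [_ Hp] Hb Heq. destruct (param_near p rho (proj1 Hrho) Hp) as [Pp Hx].
destruct (equil_in_box p x y Pp Hb Heq) as [[-> ->]|[-> Hq]].
- apply in_box_center. lra.
- unfold in_box. rewrite Rminus_0_r.
  assert (Rabs y < rho) by (apply small_roots with p; assumption). lra.
Qed.

Lemma Eq23_critical : Eq2 m1 m2 m3 m4 m4 = Eq1 m4 /\ Eq3 m1 m2 m3 m4 m4 = Eq1 m4.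
Proof.
assert (0 < m3 / m4) by (apply Rdiv_lt_0_compat; lra).
assert (Ha : qa m2 m3 m4 = - m1) by (unfold qa; subst m2; field; lra).
assert (Hb : qb m1 m2 m3 m4 m4 = 0) by (unfold qb; subst m2; field; lra).
assert (HD : qDelta m1 m2 m3 m4 m4 = 0) by (unfold qDelta, qc; rewrite Hb; ring).
unfold Eq1, Eq2, Eq3, L2, L3. rewrite Ha, Hb, HD, sqrt_0.
split; f_equal; field; lra.
Qed.

End Critical.

Theorem theorem7 (m1 m2 m3 m4 : R) :
  0 < m1 -> 0 < m2 -> 0 < m3 -> 0 < m4 ->
  m2 = m1 * (1 + m3 / m4) ->
  Eq2 m1 m2 m3 m4 m4 = Eq1 m4 /\ Eq3 m1 m2 m3 m4 m4 = Eq1 m4 /\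
  subcritical_pitchfork (fun m5 C L => fC m1 m2 m3 m4 C L)
                        (fun m5 C L => fL m5 C L) m4 (1 / m4) 0 /\
  (exists d, 0 < d /\ forall m5, m4 < m5 < m4 + d ->
     0 < qDelta m1 m2 m3 m4 m5 /\
     is_equil (fun m5 C L => fC m1 m2 m3 m4 C L) (fun m5 C L => fL m5 C L)
              m5 (fst (Eq2 m1 m2 m3 m4 m5)) (snd (Eq2 m1 m2 m3 m4 m5)) /\
     is_equil (fun m5 C L => fC m1 m2 m3 m4 C L) (fun m5 C L => fL m5 C L)
              m5 (fst (Eq3 m1 m2 m3 m4 m5)) (snd (Eq3 m1 m2 m3 m4 m5))).
Proof.
intros Hm1 Hm2 Hm3 Hm4 Hcrit.
destruct (box_radius_spec m1 m4 Hm1 Hm4) as [[Hr _] _].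
assert (Hd := param_radius_pos m1 m4 Hm1 Hm4 _ Hr).
split; [|split]; [apply Eq23_critical; assumption ..|].
split.
- split; [apply equil_E1; assumption|].
  exists 1, (box_radius m1 m4), (param_radius m1 m4 (box_radius m1 m4)).
  do 3 (split; [lra|]). split; [|split].
  + intros p Hp. apply three_equilibria_above; auto; lra.
  + intros p Hp. apply one_equilibrium_below; auto; lra.
  + apply equilibria_converge; assumption.
- exists (param_radius m1 m4 (box_radius m1 m4)). split; [assumption|].
  intros p Hp. split.
  + apply qDelta_pos; auto; lra.
  + apply equil_branches; auto.
Qed.
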